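(* Let $\mathcal H_3=\mathbb{R}^3$ with coordinates $(x,y,z)$ and metric $g=dx^2+dy^2+(dz-x\,dy)^2$ (the Heisenberg group), and let $\pi:\mathcal H_3\to\mathbb{R}^2$, $\pi(x,y,z)=(x,y)$ (a Riemannian submersion onto the Euclidean plane with minimal fibres). Let $\gamma:I\to\mathbb{R}^2$ be a curve parametrised by arc length with signed curvature $k$. Then the cylinder $S=\pi^{-1}(\gamma(I))\subset\mathcal H_3$ is a biminimal surface with respect to $\lambda$ if and only if $\gamma$ is a biminimal curve with respect to $\lambda+1$ in $\mathbb{R}^2$, i.e. $k''=k^3+(1+\lambda)k$.
   Context: For a map $\phi$: tension field $\tau(\phi)=\operatorname{trace}\nabla d\phi$, bitension field $\tau_2(\phi)=\sum_i(\nabla^\phi_{e_i}\nabla^\phi_{e_i}-\nabla^\phi_{\nabla_{e_i}e_i})\tau(\phi)+\sum_iR^N(d\phi(e_i),\tau(\phi))d\phi(e_i)$, with $R(X,Y)Z=\nabla_{[X,Y]}Z-\nabla_X\nabla_YZ+\nabla_Y\nabla_XZ$. An immersion is biminimal with respect to $\lambda\in\mathbb{R}$ if $[\tau_2(\phi)]^\perp-\lambda[\tau(\phi)]^\perp=0$ ($\perp$ = normal component). For an arc-length plane curve with signed curvature $k$, biminimality with respect to $\mu$ means $k''-k^3-\mu k=0$. *)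

From Stdlib Require Import Reals.
From Coquelicot Require Import Coquelicot.
Open Scope R_scope.

(* points of R^n are represented as functions nat -> R (coordinates 0..n-1) *)
Definition pt := nat -> R.

Fixpoint sm (k : nat) (f : nat -> R) : R :=
  match k with O => 0 | S k' => sm k' f + f k' end.

Definition upd (p : pt) (a : nat) (r : R) : pt :=
  fun i => if Nat.eqb i a then r else p i.

Definition pd (F : pt -> R) (a : nat) (p : pt) : R :=
  Derive (fun r => F (upd p a r)) (p a).

Definition det2 (M : nat -> nat -> R) : R := M 0%nat 0%nat * M 1%nat 1%nat - M 0%nat 1%nat * M 1%nat 0%nat.
Definition inv2 (M : nat -> nat -> R) (i j : nat) : R :=
  (match i, j with
   | O, O => M 1%nat 1%nat
   | O, _ => - M 0%nat 1%nat
   | _, O => - M 1%nat 0%nat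
   | _, _ => M 0%nat 0%nat end) / det2 M.
Definition cof3 (M : nat -> nat -> R) (i j : nat) : R :=
  let i1 := ((i + 1) mod 3)%nat in let i2 := ((i + 2) mod 3)%nat in
  let j1 := ((j + 1) mod 3)%nat in let j2 := ((j + 2) mod 3)%nat in
  M i1 j1 * M i2 j2 - M i1 j2 * M i2 j1.
Definition det3 (M : nat -> nat -> R) : R := sm 3 (fun j => M 0%nat j * cof3 M 0%nat j).
Definition inv3 (M : nat -> nat -> R) (i j : nat) : R := cof3 M j i / det3 M.

(* A Riemannian metric on R^3: g p a b *)
Definition metric3 := pt -> nat -> nat -> R.

Definition Gam (g : metric3) (p : pt) (c a b : nat) : R :=
  / 2 * sm 3 (fun d => inv3 (g p) c d *
     (pd (fun q => g q d a) b p + pd (fun q => g q d b) a p - pd (fun q => g q a b) d p)).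

(* usual curvature components Rm^d_{abc}, with
   Rusual(d_a,d_b)d_c = nabla_a nabla_b d_c - nabla_b nabla_a d_c = Rm^d_{abc} d_d *)
Definition Rm (g : metric3) (p : pt) (d a b c : nat) : R :=
  pd (fun q => Gam g q d b c) a p - pd (fun q => Gam g q d a c) b p
  + sm 3 (fun e => Gam g p d a e * Gam g p e b c - Gam g p d b e * Gam g p e a c).

(* the paper's curvature  R(X,Y)Z = nabla_[X,Y] Z - nabla_X nabla_Y Z + nabla_Y nabla_X Z
   (component d), at the point p *)
Definition RN (g : metric3) (p : pt) (X Y Z : pt) (d : nat) : R :=
  - sm 3 (fun a => sm 3 (fun b => sm 3 (fun c => Rm g p d a b c * X a * Y b * Z c))).

Section Immersion.
Variables (g : metric3) (phi : pt -> pt).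

Definition dphi (u : pt) (i c : nat) : R := pd (fun v => phi v c) i u.

Definition hind (u : pt) (i j : nat) : R :=
  sm 3 (fun a => sm 3 (fun b => g (phi u) a b * dphi u i a * dphi u j b)).

Definition hinv (u : pt) (i j : nat) : R := inv2 (hind u) i j.

Definition Gt (u : pt) (k i j : nat) : R :=
  / 2 * sm 2 (fun l => hinv u k l *
     (pd (fun v => hind v l i) j u + pd (fun v => hind v l j) i u - pd (fun v => hind v i j) l u)).

Definition nab (V : pt -> pt) (i : nat) (u : pt) (c : nat) : R :=
  pd (fun v => V v c) i u
  + sm 3 (fun a => sm 3 (fun b => Gam g (phi u) c a b * dphi u i a * V u b)).

Definition tau (u : pt) (c : nat) : R :=
  sm 2 (fun i => sm 2 (fun j => hinv u i j *
     (nab (fun v c' => dphi v j c') i u c - sm 2 (fun k => Gt u k i j * dphi u k c)))).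

Definition roughlap (V : pt -> pt) (u : pt) (c : nat) : R :=
  sm 2 (fun i => sm 2 (fun j => hinv u i j *
     (nab (fun v c' => nab V j v c') i u c - sm 2 (fun k => Gt u k i j * nab V k u c)))).

Definition tau2 (u : pt) (c : nat) : R :=
  roughlap tau u c
  + sm 2 (fun i => sm 2 (fun j => hinv u i j *
       RN g (phi u) (fun a => dphi u i a) (tau u) (fun a => dphi u j a) c)).

Definition normal (u : pt) (W : pt) (c : nat) : R :=
  W c - sm 2 (fun i => sm 2 (fun j => hinv u i j *
          sm 3 (fun a => sm 3 (fun b => g (phi u) a b * W a * dphi u i b)) * dphi u j c)).

Definition biminimal (D : pt -> Prop) (lambda : R) : Prop :=
  forall u, D u -> forall c, (c < 3)%nat ->
    normal u (tau2 u) c - lambda * normal u (tau u) c = 0.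

End Immersion.

(* The Heisenberg metric  dx^2 + dy^2 + (dz - x dy)^2  on R^3 = {(x,y,z)} *)
Definition heis (p : pt) (a b : nat) : R :=
  match a, b with
  | O, O => 1
  | 1%nat, 1%nat => 1 + p 0%nat ^ 2
  | 1%nat, 2%nat => - p 0%nat
  | 2%nat, 1%nat => - p 0%nat
  | 2%nat, 2%nat => 1
  | _, _ => 0
  end.

(* The cylinder pi^{-1}(gamma(I)) parametrized by (s,t) |-> (gx s, gy s, t) *)
Definition cyl (gx gy : R -> R) (u : pt) : pt :=
  fun c => match c with O => gx (u 0%nat) | 1%nat => gy (u 0%nat) | _ => u 1%nat end.

Definition curv (gx gy : R -> R) (s : R) : R :=
  Derive gx s * Derive_n gy 2 s - Derive_n gx 2 s * Derive gy s.

Definition in_I (a b : Rbar) (s : R) : Prop := Rbar_lt a s /\ Rbar_lt s b.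

(* Parametrize the cylinder by (s,t) |-> (x(s), y(s), t).  With m = x y', its induced metric is
   [[1 + m^2, -m], [-m, 1]], whose only nonzero Christoffel symbol is Gamma^t_ss = -m', and
   nu = (-y', x', x x') is a unit normal.  A direct computation gives tau = k nu and
     nabla_s nu = -(k + m/2) d_s + (1/2 - k m - m^2/2) d_t,   nabla_t nu = d_s / 2 + (m/2) d_t,
   from which the rough Laplacian of tau is (k'' - k^3 - k/2) nu plus tangential terms, while the
   curvature term of the bitension field is -(k/2) nu.  Hence the normal part of tau_2 - lambda tau
   is (k'' - k^3 - (1 + lambda) k) nu. *)

From Stdlib Require Import Reals Lra Lia Nsatz.
From Coquelicot Require Import Coquelicot.
Open Scope R_scope.

Lemma sm_ext k f g : (forall i, (i < k)%nat -> f i = g i) -> sm k f = sm k g.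
Proof.
  induction k as [|k IHk]; intros Hfg; simpl; [reflexivity|].
  rewrite IHk by (intros; apply Hfg; lia). now rewrite Hfg by lia.
Qed.

Lemma pd_ext F G i p : (forall q, F q = G q) -> pd F i p = pd G i p.
Proof. intros HFG; unfold pd; apply Derive_ext; intros; apply HFG. Qed.

Lemma is_derive_Rplus (f g : R -> R) x df dg :
  is_derive f x df -> is_derive g x dg -> is_derive (fun t => f t + g t) x (df + dg).
Proof. exact (is_derive_plus (K := R_AbsRing) (V := R_NormedModule) f g x df dg). Qed.

Lemma pd_coord0_loc (D : R -> Prop) (F : pt -> R) (f : R -> R) i p :
  open D -> D (p 0%nat) -> (forall v, D (v 0%nat) -> F v = f (v 0%nat)) ->
  pd F i p = match i with O => Derive f (p 0%nat) | _ => 0 end.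
Proof.
  intros HD Hp HF. unfold pd, upd. destruct i as [|i]; simpl.
  - apply Derive_ext_loc. apply (filter_imp D); [|now apply HD].
    intros t Ht. rewrite HF; simpl; auto.
  - rewrite <- (Derive_const (f (p 0%nat)) (p (S i))). apply Derive_ext.
    intros t. rewrite HF; simpl; auto.
Qed.

Lemma pd_coord0 (f : R -> R) i p :
  pd (fun q => f (q 0%nat)) i p = match i with O => Derive f (p 0%nat) | _ => 0 end.
Proof. apply (pd_coord0_loc (fun _ => True)); auto using open_true. Qed.


(* [heis p] is convertible to [heis_at (p 0)]. *)
Definition heis_at (x : R) : nat -> nat -> R := heis (fun _ => x).

Definition heis_at' (x : R) (a b : nat) : R :=
  match a, b with
  | 1%nat, 1%nat => 2 * x
  | 1%nat, 2%nat => -1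
  | 2%nat, 1%nat => -1
  | _, _ => 0
  end.

Definition heis_at_inv (x : R) (a b : nat) : R :=
  match a, b with
  | O, O => 1
  | 1%nat, 1%nat => 1
  | 1%nat, 2%nat => x
  | 2%nat, 1%nat => x
  | 2%nat, 2%nat => 1 + x ^ 2
  | _, _ => 0
  end.

Definition heis_inner (x : R) (v w : nat -> R) : R :=
  sm 3 (fun a => sm 3 (fun b => heis_at x a b * v a * w b)).

Definition heis_christoffel (x : R) (c a b : nat) : R :=
  match c, a, b with
  | O, 1%nat, 1%nat => - x
  | O, 1%nat, 2%nat | O, 2%nat, 1%nat => / 2
  | 1%nat, O, 1%nat | 1%nat, 1%nat, O => x / 2
  | 1%nat, O, 2%nat | 1%nat, 2%nat, O => - / 2
  | 2%nat, O, 1%nat | 2%nat, 1%nat, O => (x ^ 2 - 1) / 2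
  | 2%nat, O, 2%nat | 2%nat, 2%nat, O => - x / 2
  | _, _, _ => 0
  end.

Definition heis_christoffel' (x : R) (c a b : nat) : R :=
  match c, a, b with
  | O, 1%nat, 1%nat => - 1
  | 1%nat, O, 1%nat | 1%nat, 1%nat, O => / 2
  | 2%nat, O, 1%nat | 2%nat, 1%nat, O => x
  | 2%nat, O, 2%nat | 2%nat, 2%nat, O => - / 2
  | _, _, _ => 0
  end.

Definition heis_riemann (x : R) (d a b c : nat) : R :=
  (match a with O => heis_christoffel' x d b c | _ => 0 end)
  - (match b with O => heis_christoffel' x d a c | _ => 0 end)
  + sm 3 (fun e => heis_christoffel x d a e * heis_christoffel x e b c
                   - heis_christoffel x d b e * heis_christoffel x e a c).

Lemma pd_heis d a i p :
  pd (fun q => heis q d a) i p = match i with O => heis_at' (p 0%nat) d a | _ => 0 end.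
Proof.
  rewrite (pd_coord0 (fun x => heis_at x d a)). destruct i; [|reflexivity].
  apply is_derive_unique.
  destruct d as [|[|[|d]]]; destruct a as [|[|[|a]]]; cbn; auto_derive; auto; ring.
Qed.

Lemma inv3_heis p c d : (c < 3)%nat -> (d < 3)%nat ->
  inv3 (heis p) c d = heis_at_inv (p 0%nat) c d.
Proof.
  intros Hc Hd. unfold inv3.
  replace (det3 (heis p)) with 1 by (unfold det3, cof3; simpl; ring).
  destruct c as [|[|[|c]]]; try lia; destruct d as [|[|[|d]]]; try lia;
  unfold cof3; simpl; field.
Qed.

Lemma Gam_heis p c a b : (c < 3)%nat -> (a < 3)%nat -> (b < 3)%nat ->
  Gam heis p c a b = heis_christoffel (p 0%nat) c a b.
Proof.
  intros Hc Ha Hb. unfold Gam. cbn [sm].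
  rewrite !pd_heis, !inv3_heis by lia.
  destruct c as [|[|[|c]]]; try lia; destruct a as [|[|[|a]]]; try lia;
  destruct b as [|[|[|b]]]; try lia; simpl; field.
Qed.

Lemma pd_Gam_heis c a b i p : (c < 3)%nat -> (a < 3)%nat -> (b < 3)%nat ->
  pd (fun q => Gam heis q c a b) i p =
  match i with O => heis_christoffel' (p 0%nat) c a b | _ => 0 end.
Proof.
  intros Hc Ha Hb.
  rewrite (pd_ext _ (fun q => heis_christoffel (q 0%nat) c a b))
    by (intros; apply Gam_heis; auto).
  rewrite (pd_coord0 (fun x => heis_christoffel x c a b)). destruct i; [|reflexivity].
  apply is_derive_unique.
  destruct c as [|[|[|c]]]; try lia; destruct a as [|[|[|a]]]; try lia;
  destruct b as [|[|[|b]]]; try lia; simpl; auto_derive; auto; field.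
Qed.

Lemma Rm_heis p d a b c : (d < 3)%nat -> (a < 3)%nat -> (b < 3)%nat -> (c < 3)%nat ->
  Rm heis p d a b c = heis_riemann (p 0%nat) d a b c.
Proof.
  intros Hd Ha Hb Hc. unfold Rm, heis_riemann.
  rewrite !pd_Gam_heis by auto. f_equal. apply sm_ext. intros e He.
  rewrite !Gam_heis by lia. reflexivity.
Qed.

Section ArcLengthCurve.
Variables (a b : Rbar) (gx gy : R -> R).
Hypothesis gamma_smooth : forall n s, in_I a b s -> ex_derive_n gx n s /\ ex_derive_n gy n s.
Hypothesis gamma_arclength : forall s, in_I a b s -> Derive gx s ^ 2 + Derive gy s ^ 2 = 1.

Lemma open_in_I : open (in_I a b).
Proof. intros s [Has Hsb]. now apply locally_interval with a b. Qed.

Definition gx' (s : R) : R := Derive gx s.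
Definition gy' (s : R) : R := Derive gy s.
Definition kappa (s : R) : R := curv gx gy s.
Definition kappa' (s : R) : R := Derive kappa s.
Definition kappa'' (s : R) : R := Derive kappa' s.

Lemma unit_tangent s : in_I a b s -> gx' s * gx' s + gy' s * gy' s = 1.
Proof. intros Hs. rewrite <- (gamma_arclength s Hs). unfold gx', gy'. ring. Qed.

Lemma ex_derive_Derive_n_gx n s : in_I a b s -> ex_derive (Derive_n gx n) s.
Proof. intros Hs. exact (proj1 (gamma_smooth (S n) s Hs)). Qed.

Lemma ex_derive_Derive_n_gy n s : in_I a b s -> ex_derive (Derive_n gy n) s.
Proof. intros Hs. exact (proj2 (gamma_smooth (S n) s Hs)). Qed.

(* [auto_derive] leaves eta-expanded [Derive (fun x => f x) t] in its results. *)
Ltac eta_Derive :=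
  repeat match goal with
  | |- context [Derive (fun x => ?f x) ?t] => change (Derive (fun x => f x) t) with (Derive f t)
  end.

Ltac ex_derive_curve :=
  repeat split;
  match goal with
  | Hs : in_I a b ?s |- ex_derive _ ?s =>
      first [ exact (ex_derive_Derive_n_gx 0 s Hs) | exact (ex_derive_Derive_n_gx 1 s Hs)
            | exact (ex_derive_Derive_n_gx 2 s Hs) | exact (ex_derive_Derive_n_gx 3 s Hs)
            | exact (ex_derive_Derive_n_gy 0 s Hs) | exact (ex_derive_Derive_n_gy 1 s Hs)
            | exact (ex_derive_Derive_n_gy 2 s Hs) | exact (ex_derive_Derive_n_gy 3 s Hs) ]
  end.

Lemma arclength_orthogonal s : in_I a b s ->
  gx' s * Derive gx' s + gy' s * Derive gy' s = 0.
Proof.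
  intros Hs.
  assert (Hnorm : Derive (fun t => gx' t ^ 2 + gy' t ^ 2) s = 0).
  { rewrite <- (Derive_const 1 s). apply Derive_ext_loc.
    apply (filter_imp (in_I a b)); [|now apply open_in_I].
    intros t Ht. now apply gamma_arclength. }
  rewrite (is_derive_unique _ _ (2 * (gx' s * Derive gx' s + gy' s * Derive gy' s))) in Hnorm.
  - lra.
  - auto_derive; [ex_derive_curve|]. eta_Derive. ring.
Qed.

Lemma frenet_x s : in_I a b s -> Derive gx' s = - kappa s * gy' s.
Proof.
  intros Hs. pose proof (unit_tangent s Hs). pose proof (arclength_orthogonal s Hs).
  change (kappa s) with (gx' s * Derive gy' s - Derive gx' s * gy' s). nsatz.
Qed.

Lemma frenet_y s : in_I a b s -> Derive gy' s = kappa s * gx' s.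
Proof.
  intros Hs. pose proof (unit_tangent s Hs). pose proof (arclength_orthogonal s Hs).
  change (kappa s) with (gx' s * Derive gy' s - Derive gx' s * gy' s). nsatz.
Qed.

(* The terms [x'' y''] cancel in the derivative of [kappa = x' y'' - x'' y']. *)
Lemma is_derive_kappa s : in_I a b s ->
  is_derive kappa s (gx' s * Derive (Derive gy') s - Derive (Derive gx') s * gy' s).
Proof.
  intros Hs. apply is_derive_ext with (fun t => gx' t * Derive gy' t - Derive gx' t * gy' t);
    [reflexivity|].
  auto_derive; [ex_derive_curve|]. eta_Derive. ring.
Qed.

Lemma ex_derive_kappa s : in_I a b s -> ex_derive kappa s.
Proof. intros Hs. eexists. now apply is_derive_kappa. Qed.

Lemma ex_derive_kappa' s : in_I a b s -> ex_derive kappa' s.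
Proof.
  intros Hs.
  apply ex_derive_ext_loc with
    (fun t => gx' t * Derive (Derive gy') t - Derive (Derive gx') t * gy' t).
  - apply (filter_imp (in_I a b)); [|now apply open_in_I].
    intros t Ht. symmetry. now apply is_derive_unique, is_derive_kappa.
  - auto_derive. ex_derive_curve.
Qed.

Definition shear (s : R) : R := gx s * gy' s.
Definition shear' (s : R) : R := gx' s * gy' s + gx s * kappa s * gx' s.

Lemma Derive_shear s : in_I a b s -> Derive shear s = shear' s.
Proof.
  intros Hs. apply is_derive_unique.
  apply is_derive_ext with (fun t => gx t * gy' t); [reflexivity|].
  auto_derive; [ex_derive_curve|]. eta_Derive. rewrite frenet_y by exact Hs.
  unfold shear', gx'. ring.
Qed.

Lemma ex_derive_shear s : in_I a b s -> ex_derive shear s.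
Proof.
  intros Hs. apply ex_derive_ext with (fun t => gx t * gy' t); [reflexivity|].
  auto_derive. ex_derive_curve.
Qed.

Notation phi := (cyl gx gy).

(* The fields d_s and d_t of [phi]; for [c >= 2] the t-entry is repeated, as in [cyl]. *)
Definition cyl_tangent (s : R) (i c : nat) : R :=
  match i, c with
  | O, O => gx' s
  | O, 1%nat => gy' s
  | 1%nat, O | 1%nat, 1%nat => 0
  | 1%nat, _ => 1
  | _, _ => 0
  end.

Definition cyl_normal (s : R) (c : nat) : R :=
  match c with O => - gy' s | 1%nat => gx' s | _ => gx s * gx' s end.

Definition cyl_metric (m : R) (i j : nat) : R :=
  match i, j with O, O => 1 + m ^ 2 | 1%nat, 1%nat => 1 | _, _ => - m end.

Definition cyl_metric_inv (m : R) (i j : nat) : R :=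
  match i, j with O, O => 1 | 1%nat, 1%nat => 1 + m ^ 2 | _, _ => m end.

Definition cyl_metric' (m dm : R) (i j : nat) : R :=
  match i, j with O, O => 2 * m * dm | 1%nat, 1%nat => 0 | _, _ => - dm end.

Definition cyl_christoffel (dm : R) (l i j : nat) : R :=
  match l, i, j with 1%nat, O, O => - dm | _, _, _ => 0 end.

Lemma dphi_cyl u i c : dphi phi u i c = cyl_tangent (u 0%nat) i c.
Proof.
  unfold dphi, pd, cyl, upd.
  destruct i as [|[|i]]; destruct c as [|[|c]]; simpl;
    first [reflexivity | apply Derive_const | apply Derive_id].
Qed.

Lemma pd_dphi_cyl u j c i :
  pd (fun v => dphi phi v j c) i u =
  match i with O => Derive (fun s => cyl_tangent s j c) (u 0%nat) | _ => 0 end.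
Proof.
  rewrite (pd_ext _ (fun v => cyl_tangent (v 0%nat) j c)) by (intros; apply dphi_cyl).
  apply (pd_coord0 (fun s => cyl_tangent s j c)).
Qed.

Lemma nab_cyl V i u c : (c < 3)%nat ->
  nab heis phi V i u c = pd (fun v => V v c) i u +
    sm 3 (fun a => sm 3 (fun b =>
      heis_christoffel (gx (u 0%nat)) c a b * cyl_tangent (u 0%nat) i a * V u b)).
Proof.
  intros Hc. unfold nab. f_equal. apply sm_ext; intros a0 Ha. apply sm_ext; intros b0 Hb.
  rewrite Gam_heis, dphi_cyl by auto. reflexivity.
Qed.

Lemma hind_cyl u i j : in_I a b (u 0%nat) -> (i < 2)%nat -> (j < 2)%nat ->
  hind heis phi u i j = cyl_metric (shear (u 0%nat)) i j.
Proof.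
  intros Hu Hi Hj. pose proof (unit_tangent _ Hu).
  unfold hind. cbn [sm]. rewrite !dphi_cyl.
  destruct i as [|[|i]]; try lia; destruct j as [|[|j]]; try lia;
  unfold cyl_metric, shear; simpl; nra.
Qed.

Lemma hinv_cyl u i j : in_I a b (u 0%nat) -> (i < 2)%nat -> (j < 2)%nat ->
  hinv heis phi u i j = cyl_metric_inv (shear (u 0%nat)) i j.
Proof.
  intros Hu Hi Hj.
  assert (Hdet : det2 (hind heis phi u) = 1).
  { unfold det2. rewrite !hind_cyl by (auto; lia). unfold cyl_metric. ring. }
  unfold hinv, inv2. rewrite Hdet.
  destruct i as [|[|i]]; try lia; destruct j as [|[|j]]; try lia;
  cbv beta iota; rewrite hind_cyl by (auto; lia); unfold cyl_metric, cyl_metric_inv; field.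
Qed.

Lemma pd_hind_cyl u l i j : in_I a b (u 0%nat) -> (l < 2)%nat -> (i < 2)%nat ->
  pd (fun v => hind heis phi v l i) j u =
  match j with O => cyl_metric' (shear (u 0%nat)) (shear' (u 0%nat)) l i | _ => 0 end.
Proof.
  intros Hu Hl Hi.
  rewrite (pd_coord0_loc (in_I a b) _ (fun s => cyl_metric (shear s) l i));
    auto using open_in_I; [|intros; now apply hind_cyl].
  destruct j; [|reflexivity].
  apply is_derive_unique.
  destruct l as [|[|l]]; try lia; destruct i as [|[|i]]; try lia; simpl;
  auto_derive; auto using ex_derive_shear; eta_Derive; rewrite ?Derive_shear by exact Hu; ring.
Qed.

Lemma Gt_cyl u l i j : in_I a b (u 0%nat) -> (l < 2)%nat -> (i < 2)%nat -> (j < 2)%nat ->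
  Gt heis phi u l i j = cyl_christoffel (shear' (u 0%nat)) l i j.
Proof.
  intros Hu Hl Hi Hj. unfold Gt. cbn [sm].
  rewrite !hinv_cyl, !pd_hind_cyl by (auto; lia).
  destruct l as [|[|l]]; try lia; destruct i as [|[|i]]; try lia; destruct j as [|[|j]]; try lia;
  simpl; field.
Qed.

(* Polynomial identities modulo [x'^2 + y'^2 = 1]; [field_simplify] leaves [p / 2 = 0] when
   halves occur. *)
Ltac arclength_algebra s Hs :=
  pose proof (unit_tangent s Hs);
  apply Rminus_diag_uniq; field_simplify;
  lazymatch goal with
  | |- _ / _ = 0 => unfold Rdiv; apply Rmult_eq_0_compat_r
  | _ => idtac
  end;
  simpl; nsatz.

Lemma tau_cyl u c : in_I a b (u 0%nat) -> (c < 3)%nat ->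
  tau heis phi u c = kappa (u 0%nat) * cyl_normal (u 0%nat) c.
Proof.
  intros Hu Hc. unfold tau. cbn [sm].
  rewrite !hinv_cyl, !Gt_cyl, !nab_cyl, !pd_dphi_cyl by (auto; lia). cbn [sm].
  rewrite !dphi_cyl. set (s := u 0%nat) in *.
  destruct c as [|[|[|c]]]; try lia; simpl;
  rewrite ?frenet_x, ?frenet_y, ?Derive_const by exact Hu;
  unfold cyl_christoffel, cyl_metric_inv, cyl_tangent, cyl_normal, shear', shear; simpl;
  arclength_algebra s Hu.
Qed.

Ltac curve_derivatives Hs :=
  eta_Derive;
  rewrite ?frenet_x, ?frenet_y, ?Derive_shear, ?Derive_const by exact Hs;
  repeat match goal with
  | |- context [Derive kappa ?t] => change (Derive kappa t) with (kappa' t)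
  | |- context [Derive kappa' ?t] => change (Derive kappa' t) with (kappa'' t)
  end.

Definition cyl_normal' (s : R) (c : nat) : R :=
  match c with
  | O => - kappa s * gx' s
  | 1%nat => - kappa s * gy' s
  | _ => gx' s ^ 2 - gx s * kappa s * gy' s
  end.

Lemma is_derive_cyl_normal s c : in_I a b s ->
  is_derive (fun t => cyl_normal t c) s (cyl_normal' s c).
Proof.
  intros Hs. destruct c as [|[|c]]; simpl;
  auto_derive; try ex_derive_curve; curve_derivatives Hs; unfold gx'; ring.
Qed.

Lemma pd_tau_cyl u c i : in_I a b (u 0%nat) -> (c < 3)%nat ->
  pd (fun v => tau heis phi v c) i u =
  match i with
  | O => kappa' (u 0%nat) * cyl_normal (u 0%nat) c + kappa (u 0%nat) * cyl_normal' (u 0%nat) c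
  | _ => 0
  end.
Proof.
  intros Hu Hc.
  rewrite (pd_coord0_loc (in_I a b) _ (fun s => kappa s * cyl_normal s c));
    auto using open_in_I; [|intros; now apply tau_cyl].
  destruct i; [|reflexivity].
  apply is_derive_unique, Derive.is_derive_mult; [|now apply is_derive_cyl_normal].
  now apply Derive_correct, ex_derive_kappa.
Qed.

Definition nabla_normal (s : R) (j c : nat) : R :=
  match j with
  | O => - (kappa s + shear s / 2) * cyl_tangent s 0 c
         + (/ 2 - kappa s * shear s - shear s ^ 2 / 2) * cyl_tangent s 1 c
  | _ => cyl_tangent s 0 c / 2 + shear s / 2 * cyl_tangent s 1 c
  end.

Definition nabla_tension (s : R) (j c : nat) : R :=
  match j with
  | O => kappa' s * cyl_normal s c + kappa s * nabla_normal s j c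
  | _ => kappa s * nabla_normal s j c
  end.

Lemma nab_tau_cyl u j c : in_I a b (u 0%nat) -> (j < 2)%nat -> (c < 3)%nat ->
  nab heis phi (tau heis phi) j u c = nabla_tension (u 0%nat) j c.
Proof.
  intros Hu Hj Hc. rewrite nab_cyl, pd_tau_cyl by auto. cbn [sm].
  rewrite !tau_cyl by (auto; lia). set (s := u 0%nat) in *.
  destruct j as [|[|j]]; try lia; destruct c as [|[|[|c]]]; try lia;
  unfold nabla_tension, nabla_normal, cyl_normal', cyl_normal, cyl_tangent, shear; simpl;
  arclength_algebra s Hu.
Qed.

Definition cyl_tangent0' (s : R) (c : nat) : R :=
  match c with O => - kappa s * gy' s | 1%nat => kappa s * gx' s | _ => 0 end.

Definition nabla_normal' (s : R) (j c : nat) : R :=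
  match j with
  | O => - (kappa' s + shear' s / 2) * cyl_tangent s 0 c
         - (kappa s + shear s / 2) * cyl_tangent0' s c
         - (kappa' s * shear s + kappa s * shear' s + shear s * shear' s) * cyl_tangent s 1 c
  | _ => cyl_tangent0' s c / 2 + shear' s / 2 * cyl_tangent s 1 c
  end.

Lemma is_derive_nabla_normal s j c : in_I a b s ->
  is_derive (fun t => nabla_normal t j c) s (nabla_normal' s j c).
Proof.
  intros Hs. destruct j as [|j]; destruct c as [|[|c]]; simpl;
  auto_derive; try (repeat split; auto using ex_derive_kappa, ex_derive_shear; ex_derive_curve);
  curve_derivatives Hs; unfold cyl_tangent0'; simpl; field.
Qed.

Definition nabla_tension' (s : R) (j c : nat) : R :=
  match j with
  | O => (kappa'' s * cyl_normal s c + kappa' s * cyl_normal' s c)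
         + (kappa' s * nabla_normal s j c + kappa s * nabla_normal' s j c)
  | _ => kappa' s * nabla_normal s j c + kappa s * nabla_normal' s j c
  end.

Lemma pd_nab_tau_cyl u j c i : in_I a b (u 0%nat) -> (j < 2)%nat -> (c < 3)%nat ->
  pd (fun v => nab heis phi (tau heis phi) j v c) i u =
  match i with O => nabla_tension' (u 0%nat) j c | _ => 0 end.
Proof.
  intros Hu Hj Hc.
  rewrite (pd_coord0_loc (in_I a b) _ (fun s => nabla_tension s j c));
    auto using open_in_I; [|intros; now apply nab_tau_cyl].
  destruct i; [|reflexivity].
  apply is_derive_unique.
  assert (Hnabla : is_derive (fun t => kappa t * nabla_normal t j c) (u 0%nat)
            (kappa' (u 0%nat) * nabla_normal (u 0%nat) j c
             + kappa (u 0%nat) * nabla_normal' (u 0%nat) j c)).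
  { apply Derive.is_derive_mult; [|now apply is_derive_nabla_normal].
    now apply Derive_correct, ex_derive_kappa. }
  destruct j; [|exact Hnabla].
  apply is_derive_Rplus; [|exact Hnabla].
  apply Derive.is_derive_mult; [|now apply is_derive_cyl_normal].
  now apply Derive_correct, ex_derive_kappa'.
Qed.

Lemma roughlap_tau_cyl u c : in_I a b (u 0%nat) -> (c < 3)%nat ->
  roughlap heis phi (tau heis phi) u c =
  (kappa'' (u 0%nat) - kappa (u 0%nat) ^ 3 - kappa (u 0%nat) / 2) * cyl_normal (u 0%nat) c
  - 3 * kappa (u 0%nat) * kappa' (u 0%nat) * cyl_tangent (u 0%nat) 0 c
  + kappa' (u 0%nat) * (1 - 3 * kappa (u 0%nat) * shear (u 0%nat)) * cyl_tangent (u 0%nat) 1 c.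
Proof.
  intros Hu Hc. unfold roughlap. cbn [sm].
  rewrite !hinv_cyl, !Gt_cyl, !nab_tau_cyl, !nab_cyl by (auto; lia). cbv beta.
  rewrite !pd_nab_tau_cyl by (auto; lia). cbn [sm].
  rewrite !nab_tau_cyl by (auto; lia). set (s := u 0%nat) in *.
  destruct c as [|[|[|c]]]; try lia;
  unfold nabla_tension', nabla_tension, nabla_normal', nabla_normal, cyl_tangent0',
    cyl_normal', cyl_normal, cyl_tangent, cyl_christoffel, cyl_metric_inv, shear', shear;
  simpl; arclength_algebra s Hu.
Qed.

Lemma curvature_term_cyl u c : in_I a b (u 0%nat) -> (c < 3)%nat ->
  sm 2 (fun i => sm 2 (fun j => hinv heis phi u i j *
    RN heis (phi u) (fun e => dphi phi u i e) (tau heis phi u) (fun e => dphi phi u j e) c))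
  = - kappa (u 0%nat) / 2 * cyl_normal (u 0%nat) c.
Proof.
  intros Hu Hc. unfold RN. cbn [sm].
  rewrite !hinv_cyl, !Rm_heis, !tau_cyl, !dphi_cyl by (auto; lia). set (s := u 0%nat) in *.
  destruct c as [|[|[|c]]]; try lia;
  unfold heis_riemann, heis_christoffel, heis_christoffel', cyl_normal, cyl_tangent,
    cyl_metric_inv, shear;
  simpl; arclength_algebra s Hu.
Qed.

Lemma tau2_cyl u c : in_I a b (u 0%nat) -> (c < 3)%nat ->
  tau2 heis phi u c =
  (kappa'' (u 0%nat) - kappa (u 0%nat) ^ 3 - kappa (u 0%nat)) * cyl_normal (u 0%nat) c
  - 3 * kappa (u 0%nat) * kappa' (u 0%nat) * cyl_tangent (u 0%nat) 0 c
  + kappa' (u 0%nat) * (1 - 3 * kappa (u 0%nat) * shear (u 0%nat)) * cyl_tangent (u 0%nat) 1 c.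
Proof.
  intros Hu Hc. unfold tau2. rewrite roughlap_tau_cyl, curvature_term_cyl by auto. field.
Qed.

Lemma normal_cyl u W c : in_I a b (u 0%nat) -> (c < 3)%nat ->
  normal heis phi u W c =
  heis_inner (gx (u 0%nat)) W (cyl_normal (u 0%nat)) * cyl_normal (u 0%nat) c.
Proof.
  intros Hu Hc. unfold normal, heis_inner. cbn [sm].
  rewrite !hinv_cyl, !dphi_cyl by (auto; lia). set (s := u 0%nat) in *.
  destruct c as [|[|[|c]]]; try lia;
  unfold cyl_normal, cyl_tangent, cyl_metric_inv, shear; simpl; arclength_algebra s Hu.
Qed.

Lemma heis_inner_cyl_normal s W alpha beta gamma : in_I a b s ->
  (forall c, (c < 3)%nat ->
     W c = alpha * cyl_normal s c + beta * cyl_tangent s 0 c + gamma * cyl_tangent s 1 c) ->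
  heis_inner (gx s) W (cyl_normal s) = alpha.
Proof.
  intros Hs HW. unfold heis_inner. cbn [sm]. rewrite !HW by lia.
  unfold cyl_normal, cyl_tangent; simpl; arclength_algebra s Hs.
Qed.

Lemma normal_tau_cyl u c : in_I a b (u 0%nat) -> (c < 3)%nat ->
  normal heis phi u (tau heis phi u) c = kappa (u 0%nat) * cyl_normal (u 0%nat) c.
Proof.
  intros Hu Hc. rewrite normal_cyl by auto.
  rewrite (heis_inner_cyl_normal _ _ (kappa (u 0%nat)) 0 0); auto.
  intros e He. rewrite tau_cyl by auto. ring.
Qed.

Lemma normal_tau2_cyl u c : in_I a b (u 0%nat) -> (c < 3)%nat ->
  normal heis phi u (tau2 heis phi u) c =
  (kappa'' (u 0%nat) - kappa (u 0%nat) ^ 3 - kappa (u 0%nat)) * cyl_normal (u 0%nat) c.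
Proof.
  intros Hu Hc. rewrite normal_cyl by auto. f_equal.
  apply heis_inner_cyl_normal with (- 3 * kappa (u 0%nat) * kappa' (u 0%nat))
    (kappa' (u 0%nat) * (1 - 3 * kappa (u 0%nat) * shear (u 0%nat))); auto.
  intros e He. rewrite tau2_cyl by auto. ring.
Qed.

Lemma biminimal_cyl_iff lambda :
  biminimal heis phi (fun u => in_I a b (u 0%nat)) lambda <->
  forall s, in_I a b s -> kappa'' s = kappa s ^ 3 + (1 + lambda) * kappa s.
Proof.
  split.
  - intros Hbimin s Hs.
    set (u := fun i : nat => match i with O => s | _ => 0 end).
    assert (Hnu : forall c, (c < 3)%nat ->
      (kappa'' s - kappa s ^ 3 - (1 + lambda) * kappa s) * cyl_normal s c = 0).
    { intros c Hc. pose proof (Hbimin u Hs c Hc) as Hc0.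
      rewrite normal_tau2_cyl, normal_tau_cyl in Hc0 by auto.
      change (u 0%nat) with s in Hc0. rewrite <- Hc0. ring. }
    pose proof (Hnu 0%nat ltac:(lia)) as Hnu0. pose proof (Hnu 1%nat ltac:(lia)) as Hnu1.
    simpl in Hnu0, Hnu1. pose proof (unit_tangent s Hs). simpl. nsatz.
  - intros Hcurv u Hu c Hc.
    rewrite normal_tau2_cyl, normal_tau_cyl, Hcurv by auto. ring.
Qed.

End ArcLengthCurve.

Theorem proposition5p2 (a b : Rbar) (gx gy : R -> R) (lambda : R) :
  Rbar_lt a b ->
  (* gamma = (gx, gy) is smooth on the open interval I = (a,b) *)
  (forall n s, in_I a b s -> ex_derive_n gx n s /\ ex_derive_n gy n s) ->
  (* parametrized by arc length *)
  (forall s, in_I a b s -> Derive gx s ^ 2 + Derive gy s ^ 2 = 1) ->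
  (biminimal heis (cyl gx gy) (fun u => in_I a b (u 0%nat)) lambda <->
   forall s, in_I a b s ->
     Derive_n (curv gx gy) 2 s = curv gx gy s ^ 3 + (1 + lambda) * curv gx gy s).
Proof.
  (* For an empty interval both sides hold vacuously. *)
  intros _ Hsmooth Harclength. exact (biminimal_cyl_iff a b gx gy Hsmooth Harclength lambda).
Qed.
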